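(* Let $C$ be a ring with vertices $v_0,\dots,v_{n-1}$ ($n\ge 3$), edges $e_i=(v_i,v_{i+1})$ for $i\in\{0,\dots,n-2\}$ and $e_{n-1}=(v_{n-1},v_0)$, positive edge weights $w$, and homebase $v_0$, and let $q\ge 0$ be the invoking cost. For each $i\in\{0,\dots,n-1\}$ let $C_i=C\setminus e_i$ (a path). For $i\in\{1,\dots,n-2\}$ let $v_i^{\min}$ (resp. $v_i^{\max}$) be the vertex among $v_i,v_{i+1}$ whose distance $d_{C_i}(v_0,\cdot)$ in $C_i$ is smaller (resp. larger). Set $c_0=q+w(C_0)$, $c_{n-1}=q+w(C_{n-1})$, and for $i\in\{1,\dots,n-2\}$ set $c_i=\min\{2q+w(C_i),\; q+d_{C_i}(v_0,v_i^{\min})+w(C_i)\}$. Let $i^*$ be an index minimizing $c_i$. Define the strategy $\mathcal{S}$ (procedure RingOffline) as follows: invoke an agent $a_1$ at $v_0$; if $i^*=0$, $a_1$ traverses the path $C_0$ from $v_0$ to $v_1$; if $i^*=n-1$, $a_1$ traverses the path $C_{n-1}$ from $v_0$ to $v_{n-1}$; if $1\le i^*\le n-2$ and $2q+w(C_{i^*})<q+d_{C_{i^*}}(v_0,v^{\min}_{i^*})+w(C_{i^*})$, then $a_1$ traverses the path in $C_{i^*}$ from $v_0$ to $v^{\min}_{i^*}$, a second agent $a_2$ is invoked at $v_0$ and traverses the path in $C_{i^*}$ from $v_0$ to $v^{\max}_{i^*}$; otherwise (with $1\le i^*\le n-2$) $a_1$ traverses the path in $C_{i^*}$ from $v_0$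 to $v^{\min}_{i^*}$ and then the path in $C_{i^*}$ from $v^{\min}_{i^*}$ to $v^{\max}_{i^*}$. Then $\mathcal{S}$ explores $C$ and is cost-optimal, i.e., its cost is minimum among all strategies exploring $C$.
   Context: Exploration model: a connected undirected graph with positive edge weights $w$ and a designated homebase vertex is given, together with an invoking cost $q\ge 0$. A strategy is a finite sequence of moves, each either (1) invoking a new agent, which appears at the homebase, or (2) an agent traversing an edge incident to its current vertex. A vertex is explored when it is visited for the first time; a strategy explores the graph if every vertex is visited by at least one agent (agents need not return to the homebase). If a strategy uses $k$ agents and agent $i$ traverses a total distance $d_i$ (sum of weights of the edges it traverses, with multiplicity), its cost is $kq+\sum_{i=1}^k d_i$. A strategy is cost-optimal (off-line setting, graph known in advance) if it explores the graph with minimum cost. For a subgraph $H$, $w(H)$ is the sum of the weights of its edges; $d_H(u,v)$ is the weighted shortest-path distance in $H$. *)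

From mathcomp Require Import all_boot all_order all_algebra.
Set Implicit Arguments. Unset Strict Implicit. Unset Printing Implicit Defensive.
Import Order.TTheory GRing.Theory Num.Theory.
Local Open Scope ring_scope.

(* A (simple, undirected) weighted graph on a finite vertex type V is given by
   an adjacency relation [adj] and a weight function [wt] (wt x y is the
   weight of the edge {x,y} when adj x y). *)

Section Model.
Variables (R : realFieldType) (V : finType).

(* A move: invoke a new agent (it appears at the homebase), or let agent
   number k (agents are numbered 0,1,... in order of invocation) traverse the
   edge from its current vertex to the adjacent vertex v. *)
Inductive move := Invoke | Step of nat & V.

(* state: positions of the agents, list of visited vertices, total distance *)
Definition mstate := (seq V * seq V * R)%type.

Definition step_state (adj : rel V) (wt : V -> V -> R) (h : V)
    (st : option mstate) (m : move) : option mstate :=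
  match st with
  | None => None
  | Some (pos, vis, d) =>
    match m with
    | Invoke => Some (rcons pos h, h :: vis, d)
    | Step k v =>
      if (k < size pos)%N && adj (nth h pos k) v then
        Some (set_nth h pos k v, v :: vis, d + wt (nth h pos k) v)
      else None
    end
  end.

Definition run adj wt h (S : seq move) : option mstate :=
  foldl (step_state adj wt h) (Some ([::], [::], 0)) S.

Definition explores adj wt h (S : seq move) : Prop :=
  exists pos vis d, run adj wt h S = Some (pos, vis, d) /\ forall v : V, v \in vis.

(* cost = k q + sum of distances travelled (meaningful for legal strategies) *)
Definition cost adj wt h (q : R) (S : seq move) : R :=
  match run adj wt h S with
  | Some (pos, _, d) => q * (size pos)%:R + d
  | None => 0
  end.

Fixpoint walk_wt (wt : V -> V -> R) (u : V) (p : seq V) : R :=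
  match p with [::] => 0 | v :: p' => wt u v + walk_wt wt v p' end.

Definition is_dist (adj : rel V) (wt : V -> V -> R) (u v : V) (d : R) : Prop :=
  (exists p, path adj u p /\ last u p = v /\ walk_wt wt u p = d) /\
  (forall p, path adj u p -> last u p = v -> d <= walk_wt wt u p).

End Model.
Arguments Invoke {V}.

Lemma ring_pos n : (2 < n)%N -> (0 < n)%N.
Proof. by move=> H; apply: leq_trans H. Qed.

Section Ring.
Variables (R : realFieldType) (n : nat) (Hn : (2 < n)%N).

Definition vtx (k : nat) : 'I_n := Ordinal (ltn_pmod k (ring_pos Hn)).
Definition hb : 'I_n := vtx 0.

(* edge e_i = (v_i, v_(i+1 mod n)) *)
Definition ring_adj : rel 'I_n := fun x y => (y == ordS x) || (x == ordS y).
Definition ring_wt (w : 'I_n -> R) (x y : 'I_n) : R :=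
  if y == ordS x then w x else if x == ordS y then w y else 0.

Definition ringC_adj (i : 'I_n) : rel 'I_n := fun x y =>
  ring_adj x y && ~~ (((x == i) && (y == ordS i)) || ((y == i) && (x == ordS i))).

Definition wC (w : 'I_n -> R) (i : 'I_n) : R := \sum_(k < n | k != i) w k.

(* v_i^min : lo i = true means v_i^min = v_i (and v_i^max = v_(i+1)),
   lo i = false means v_i^min = v_(i+1) (and v_i^max = v_i). *)
Definition vmin (lo : 'I_n -> bool) (i : 'I_n) : 'I_n :=
  if lo i then i else ordS i.

Definition ring_c (w : 'I_n -> R) (q : R) (dC : 'I_n -> 'I_n -> R)
    (lo : 'I_n -> bool) (i : 'I_n) : R :=
  if ((i : nat) == 0%N) || ((i : nat) == n.-1) then q + wC w i
  else Num.min (q *+ 2 + wC w i) (q + dC i (vmin lo i) + wC w i).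

Definition fwd (a j : nat) : seq (move 'I_n) := [seq Step a (vtx t) | t <- iota 1 j].
Definition bwd (a j : nat) : seq (move 'I_n) := [seq Step a (vtx (n - t)) | t <- iota 1 (n - j)].
Definition back_to0 (a i : nat) : seq (move 'I_n) := [seq Step a (vtx (i - t)) | t <- iota 1 i].
Definition fwd_to0 (a i : nat) : seq (move 'I_n) := [seq Step a (vtx t) | t <- iota i.+2 (n - i.+1)].

Definition ringOffline (w : 'I_n -> R) (q : R) (dC : 'I_n -> 'I_n -> R)
    (lo : 'I_n -> bool) (ist : 'I_n) : seq (move 'I_n) :=
  let i := (ist : nat) in
  if i == 0%N then Invoke :: bwd 0 1
  else if i == n.-1 then Invoke :: fwd 0 n.-1
  else
    let to_min a := if lo ist then fwd a i else bwd a i.+1 in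
    let to_max a := if lo ist then bwd a i.+1 else fwd a i in
    if q *+ 2 + wC w ist < q + dC ist (vmin lo ist) + wC w ist then
      Invoke :: to_min 0%N ++ Invoke :: to_max 1%N
    else
      Invoke :: to_min 0%N ++
      (if lo ist then back_to0 0 i ++ bwd 0 i.+1 else fwd_to0 0 i ++ fwd 0 i).

End Ring.

From mathcomp Require Import all_boot all_order all_algebra.
From mathcomp Require Import zify ring lra.
Set Implicit Arguments. Unset Strict Implicit. Unset Printing Implicit Defensive.
Import Order.TTheory GRing.Theory Num.Theory.
Local Open Scope ring_scope.

(* Lower bound: follow any exploring strategy move by move.  As long as some
   arc [v_(b+1)], ..., [v_(e-1)] is unvisited, every edge used so far lies in
   [C_b], which we unroll at [v_0] into a segment carrying a 1-Lipschitz signed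
   coordinate.  The distance travelled is at least the weight of the explored
   arc, and while there is only one agent, at least twice that weight minus the
   agent's distance from [v_0].  When the last vertex is visited, the edge [e_b]
   has never been crossed, so the cost is at least [2q + w(C_b)] with two agents
   or more, and at least [q + w(C_b) + min(d(v_0,v_b), d(v_0,v_(b+1)))] with a
   single agent; both dominate [c_b]. *)

Lemma all_set_nth (T : Type) (P : pred T) x0 s k v :
  (k < size s)%N -> all P s -> P v -> all P (set_nth x0 s k v).
Proof.
elim: s k => [|x s IH] [|k] //= ks /andP[Px Ps] Pv; first by rewrite Pv.
by rewrite Px IH.
Qed.

Section Walks.
Variables (R : realFieldType) (V : finType) (adj : rel V) (wt : V -> V -> R).

Lemma walk_wt_cat u p1 p2 :
  walk_wt wt u (p1 ++ p2) = walk_wt wt u p1 + walk_wt wt (last u p1) p2.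
Proof. by elim: p1 u => [|x p IH] u /=; rewrite ?add0r // IH addrA. Qed.

Lemma lipschitz_walk (f : V -> R) u p :
  (forall x y, adj x y -> `|f y - f x| <= wt x y) ->
  path adj u p -> `|f (last u p) - f u| <= walk_wt wt u p.
Proof.
move=> f_lip; elim: p u => [|x p IH] u /=; first by rewrite subrr normr0.
case/andP=> /f_lip ux /IH xp; rewrite -(subrKA (f x)) addrC.
by apply: le_trans (ler_normD _ _) _; apply: lerD.
Qed.

Lemma is_dist_lipschitz (f : V -> R) u v d :
  (forall x y, adj x y -> `|f y - f x| <= wt x y) ->
  is_dist adj wt u v d -> `|f v - f u| <= d.
Proof. by move=> f_lip [[p [up [<- <-]]] _]; apply: lipschitz_walk. Qed.

Lemma walk_telescope (f : nat -> V) (g : nat -> R) m j :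
  (forall t, (m <= t < m + j)%N ->
     adj (f t) (f t.+1) /\ wt (f t) (f t.+1) = g t.+1 - g t) ->
  [/\ path adj (f m) [seq f t | t <- iota m.+1 j],
      last (f m) [seq f t | t <- iota m.+1 j] = f (m + j)%N &
      walk_wt wt (f m) [seq f t | t <- iota m.+1 j] = g (m + j)%N - g m].
Proof.
elim: j m => [|j IH] m fg /=; first by rewrite addn0 subrr.
have [fm fm1 fm2] := IH m.+1 (fun t ht => fg t (ltac:(lia))).
have [adj_m wt_m] := fg m (ltac:(lia)).
rewrite adj_m fm fm1 fm2 wt_m addSnnS; split => //; ring.
Qed.

End Walks.

Section Runs.
Variables (R : realFieldType) (V : finType) (adj : rel V) (wt : V -> V -> R) (h : V).

Lemma run_steps a pos vis d p : (a < size pos)%N -> path adj (nth h pos a) p ->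
  foldl (step_state adj wt h) (Some (pos, vis, d)) [seq Step a x | x <- p] =
  Some (set_nth h pos a (last (nth h pos a) p), rev p ++ vis,
        d + walk_wt wt (nth h pos a) p).
Proof.
elim: p pos vis d => [|x p IH] pos vis d a_pos /=.
  by move=> _; rewrite addr0 set_nthE a_pos -drop_nth // cat_take_drop.
case/andP=> px xp; rewrite a_pos px /= IH ?nth_set_nth /= ?eqxx //; last first.
  by rewrite size_set_nth; lia.
by rewrite set_set_nth eqxx rev_cons cat_rcons addrA.
Qed.

Lemma run_one_agent p : path adj h p ->
  run adj wt h (Invoke :: [seq Step 0 x | x <- p]) =
  Some ([:: last h p], rev p ++ [:: h], walk_wt wt h p).
Proof. by move=> hp; rewrite /run /= run_steps //= add0r. Qed.

Lemma run_two_agents p1 p2 : path adj h p1 -> path adj h p2 ->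
  run adj wt h (Invoke :: [seq Step 0 x | x <- p1] ++ Invoke :: [seq Step 1 x | x <- p2]) =
  Some ([:: last h p1; last h p2], rev p2 ++ h :: rev p1 ++ [:: h],
        walk_wt wt h p1 + walk_wt wt h p2).
Proof.
move=> hp1 hp2; rewrite /run /= foldl_cat run_steps //= add0r.
by rewrite run_steps.
Qed.

Definition explores_at_cost q S c := explores adj wt h S /\ cost adj wt h q S = c.

Lemma one_agent_explores_at_cost q p c : path adj h p -> (forall v, v \in h :: p) ->
  q + walk_wt wt h p = c ->
  explores_at_cost q (Invoke :: [seq Step 0 x | x <- p]) c.
Proof.
move=> hp cover <-; rewrite /explores_at_cost /explores /cost run_one_agent //.
split; last by rewrite mulr1.
do 3!eexists; split; first by [].
by move=> v; rewrite mem_cat mem_rev mem_seq1 orbC -in_cons.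
Qed.

Lemma two_agents_explores_at_cost q p1 p2 c : path adj h p1 -> path adj h p2 ->
  (forall v, v \in h :: p1 ++ p2) -> q *+ 2 + walk_wt wt h p1 + walk_wt wt h p2 = c ->
  explores_at_cost q (Invoke :: [seq Step 0 x | x <- p1] ++ Invoke :: [seq Step 1 x | x <- p2]) c.
Proof.
move=> hp1 hp2 cover <-; rewrite /explores_at_cost /explores /cost run_two_agents //.
split; last by rewrite mulr_natr addrA.
do 3!eexists; split; first by [].
move=> v; move: (cover v); rewrite !(inE, mem_cat, mem_rev).
by case/orP=> [->|/orP[]->]; rewrite ?orbT.
Qed.

End Runs.

Section Ring.
Variables (R : realFieldType) (n : nat) (Hn : (2 < n)%N) (w : 'I_n -> R).
Hypothesis w_pos : forall i, 0 < w i.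

Local Notation vtx := (vtx Hn).
Local Notation hb := (hb Hn).
Local Notation ring_adj := (@ring_adj n).

Lemma ordS_val (x : 'I_n) : (ordS x : nat) = if x.+1 == n then 0%N else x.+1.
Proof.
rewrite /=; case: eqP => [->|ne]; first by rewrite modnn.
by rewrite modn_small //; have := ltn_ord x; lia.
Qed.

Lemma vtx_ord (x : 'I_n) : vtx x = x.
Proof. by apply: val_inj; rewrite /= modn_small. Qed.

Lemma vtxS k : vtx k.+1 = ordS (vtx k).
Proof. by apply: val_inj; rewrite /= -[(k %% n).+1]addn1 modnDml addn1. Qed.

Lemma vtx_n : vtx n = hb.
Proof. by apply: val_inj; rewrite /= modnn mod0n. Qed.

Lemma hb_val : (hb : nat) = 0%N.
Proof. by rewrite /= mod0n. Qed.

(* This is where [2 < n] is used: on a 2-cycle, [ordS] is an involution. *)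
Lemma ordS_ordS_neq (x : 'I_n) : ordS (ordS x) != x.
Proof.
apply/eqP => /(congr1 (@nat_of_ord n)); rewrite !ordS_val; have := ltn_ord x.
by case: (x.+1 =P n) => /= [|_]; case: eqP; lia.
Qed.

Lemma ring_wt_ordS (x : 'I_n) : ring_wt w x (ordS x) = w x.
Proof. by rewrite /ring_wt eqxx. Qed.

Lemma ring_wt_ordS_sym (x : 'I_n) : ring_wt w (ordS x) x = w x.
Proof. by rewrite /ring_wt [x == _]eq_sym (negbTE (ordS_ordS_neq x)) eqxx. Qed.

Lemma ring_wt_ge0 x y : 0 <= ring_wt w x y.
Proof. by rewrite /ring_wt; case: ifP => _; last case: ifP => _; exact/ltW || exact: lexx. Qed.

Lemma ring_adj_vtxS k : ring_adj (vtx k) (vtx k.+1).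
Proof. by rewrite vtxS /ring_adj eqxx. Qed.

Lemma ring_adj_vtxS_sym k : ring_adj (vtx k.+1) (vtx k).
Proof. by rewrite vtxS /ring_adj eqxx orbT. Qed.

Lemma ringC_adjC (i : 'I_n) : symmetric (ringC_adj i).
Proof. by move=> x y; rewrite /ringC_adj /ring_adj orbC [X in ~~ X]orbC. Qed.

Lemma ringC_adj_ordS (i x : 'I_n) : x != i -> ringC_adj i x (ordS x).
Proof.
move=> /negbTE xi; rewrite /ringC_adj /ring_adj eqxx xi /=.
by apply/negP => /andP[/eqP <- /eqP x_eq]; move: (ordS_ordS_neq x); rewrite -x_eq eqxx.
Qed.

Lemma ringC_adj_vtxS (i : 'I_n) k : (k < n)%N -> k != i ->
  ringC_adj i (vtx k) (vtx k.+1).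
Proof.
by move=> kn ki; rewrite vtxS ringC_adj_ordS // -val_eqE /= modn_small.
Qed.

Definition warc (m : nat) : R := \sum_(k < n | (k < m)%N) w k.
Definition wtot : R := \sum_(k < n) w k.

Lemma warc0 : warc 0 = 0.
Proof. by rewrite /warc big_pred0. Qed.

Lemma warc_n : warc n = wtot.
Proof. by apply: eq_bigl => k; rewrite ltn_ord. Qed.

Lemma warcS_ord (x : 'I_n) : warc x.+1 = warc x + w x.
Proof.
rewrite /warc (bigD1 x) //= addrC; congr (_ + _); apply: eq_bigl => k.
by rewrite ltnS leq_eqVlt -val_eqE /=; case: ltngtP.
Qed.

Lemma warcS k : (k < n)%N -> warc k.+1 = warc k + w (vtx k).
Proof. by move=> kn; have vk : (vtx k : nat) = k := modn_small kn; rewrite -{1 2}vk warcS_ord. Qed.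

Lemma warc_ge0 m : 0 <= warc m.
Proof. by apply: sumr_ge0 => k _; apply: ltW. Qed.

Lemma le_warc m1 m2 : (m1 <= m2)%N -> warc m1 <= warc m2.
Proof.
move=> m12; rewrite {2}/warc (bigID (fun k : 'I_n => (k < m1)%N)) /=.
have -> : \sum_(k < n | (k < m2)%N && (k < m1)%N) w k = warc m1.
  by apply: eq_bigl => k; apply/andP/idP => [[]|k1] //; split=> //; lia.
by rewrite lerDl; apply: sumr_ge0 => k _; apply: ltW.
Qed.

Lemma warc_le_wtot m : warc m <= wtot.
Proof.
case: (leqP m n) => [mn|nm]; first by rewrite -warc_n le_warc.
suff -> : warc m = wtot by [].
by apply: eq_bigl => k; have := ltn_ord k; lia.
Qed.

Lemma wCE (i : 'I_n) : wC w i = warc i + (wtot - warc i.+1).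
Proof. by rewrite warcS_ord /wtot (bigD1 i) //= /wC; ring. Qed.

Lemma ring_walk_fwd (adj : rel 'I_n) s j : (s + j <= n)%N ->
  (forall t, (s <= t < s + j)%N -> adj (vtx t) (vtx t.+1)) ->
  [/\ path adj (vtx s) [seq vtx t | t <- iota s.+1 j],
      last (vtx s) [seq vtx t | t <- iota s.+1 j] = vtx (s + j) &
      walk_wt (ring_wt w) (vtx s) [seq vtx t | t <- iota s.+1 j] = warc (s + j) - warc s].
Proof.
move=> sjn sj_adj; apply: walk_telescope => t ht; split; first exact: sj_adj.
by rewrite vtxS ring_wt_ordS warcS; [ring | lia].
Qed.

Lemma ring_walk_bwd (adj : rel 'I_n) s j : (j <= s <= n)%N ->
  (forall t, (s - j <= t < s)%N -> adj (vtx t.+1) (vtx t)) ->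
  [/\ path adj (vtx s) [seq vtx (s - t) | t <- iota 1 j],
      last (vtx s) [seq vtx (s - t) | t <- iota 1 j] = vtx (s - j) &
      walk_wt (ring_wt w) (vtx s) [seq vtx (s - t) | t <- iota 1 j] = warc s - warc (s - j)].
Proof.
move=> js sj_adj.
have step t : (0 <= t < 0 + j)%N -> adj (vtx (s - t)) (vtx (s - t.+1)) /\
    ring_wt w (vtx (s - t)) (vtx (s - t.+1)) = - warc (s - t.+1) - - warc (s - t).
  move=> tj; have -> : (s - t = (s - t.+1).+1)%N by lia.
  split; first by apply: sj_adj; lia.
  by rewrite vtxS ring_wt_ordS_sym warcS; [ring | lia].
have [] := walk_telescope (f := fun t => vtx (s - t)) step.
by rewrite /= add0n !subn0 => ? ? ->; split => //; ring.
Qed.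

(* The position of [v] on the path [C_c], measured from [v_0], positive on the
   side of [v_1] and negative on the side of [v_(n-1)]. *)
Definition coordC (c : nat) (v : 'I_n) : R :=
  if (v <= c)%N then warc v else warc v - wtot.

Lemma coordC_hb c : coordC c hb = 0.
Proof. by rewrite /coordC hb_val warc0. Qed.

Lemma coordC_ordS c (x : 'I_n) : (c < n)%N -> (x : nat) != c ->
  coordC c (ordS x) = coordC c x + w x.
Proof.
move=> cn xc; rewrite /coordC ordS_val; have := ltn_ord x.
case: (x.+1 =P n) => [xn|_] xlt.
  have := warcS_ord x; rewrite xn warc_n => ->.
  by rewrite warc0 leq0n ifF; [ring | lia].
rewrite warcS_ord; case: (leqP x.+1 c) => xc1.
  by rewrite ifT ?(ltnW xc1).
by rewrite ifF ?ifF; try lia; ring.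
Qed.

Lemma coordC_lipschitz (i : 'I_n) x y :
  ringC_adj i x y -> `|coordC i y - coordC i x| <= ring_wt w x y.
Proof.
case/andP=> /orP[] /eqP-> not_i.
  have xi : (x : nat) != i by apply: contra not_i => /eqP/val_inj->; rewrite !eqxx.
  by rewrite coordC_ordS // ring_wt_ordS addrC addKr (ger0_norm (ltW (w_pos x))).
have yi : (y : nat) != i by apply: contra not_i => /eqP/val_inj->; rewrite !eqxx orbT.
by rewrite coordC_ordS // ring_wt_ordS_sym opprD addNKr normrN (ger0_norm (ltW (w_pos y))).
Qed.

Lemma ringC_dist_self (i : 'I_n) d :
  is_dist (ringC_adj i) (ring_wt w) hb i d -> d = warc i.
Proof.
move=> di; apply/le_anti/andP; split.
  have adj_t t : (0 <= t < 0 + i)%N -> ringC_adj i (vtx t) (vtx t.+1).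
    by move=> ti; apply: ringC_adj_vtxS; have := ltn_ord i; lia.
  have [p_path p_last p_wt] := ring_walk_fwd (ltnW (ltn_ord i) : (0 + i <= n)%N) adj_t.
  rewrite add0n vtx_ord in p_last; rewrite add0n warc0 subr0 in p_wt.
  by rewrite -p_wt; apply: di.2.
have := is_dist_lipschitz (@coordC_lipschitz i) di.
by rewrite coordC_hb subr0 /coordC leqnn; apply: le_trans; apply: ler_norm.
Qed.

Lemma ringC_dist_ordS (i : 'I_n) d : (i.+1 < n)%N ->
  is_dist (ringC_adj i) (ring_wt w) hb (ordS i) d -> d = wtot - warc i.+1.
Proof.
move=> i1n di; apply/le_anti/andP; split.
  have adj_t t : (n - (n - i.+1) <= t < n)%N -> ringC_adj i (vtx t.+1) (vtx t).
    by move=> ti; rewrite ringC_adjC; apply: ringC_adj_vtxS; lia.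
  have jn : (n - i.+1 <= n <= n)%N by rewrite leq_subr leqnn.
  have [p_path p_last p_wt] := ring_walk_bwd jn adj_t.
  have i1 : (n - (n - i.+1) = i.+1)%N by lia.
  rewrite i1 vtxS vtx_ord in p_last; rewrite i1 warc_n vtx_n in p_wt.
  by rewrite -p_wt; apply: di.2; rewrite -?vtx_n.
have := is_dist_lipschitz (@coordC_lipschitz i) di.
rewrite coordC_hb subr0 /coordC ordS_val (ltn_eqF i1n) /= ltnn.
by rewrite -normrN opprB; apply: le_trans; apply: ler_norm.
Qed.

Definition uncrossed_cost (q : R) (b : 'I_n) : R :=
  q + wC w b + Num.min q (Num.min (warc b) (wtot - warc b.+1)).

Lemma ring_c_uncrossed (q : R) (dC : 'I_n -> 'I_n -> R) (lo : 'I_n -> bool) (i : 'I_n) :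
  0 <= q ->
  (forall i v, is_dist (ringC_adj i) (ring_wt w) hb v (dC i v)) ->
  ((0 < i < n.-1)%N -> if lo i then dC i i <= dC i (ordS i) else dC i (ordS i) <= dC i i) ->
  ring_c w q dC lo i = uncrossed_cost q i.
Proof.
move=> q_ge0 HdC Hlo; rewrite /ring_c /uncrossed_cost.
have A_ge0 := warc_ge0 i; have B_ge0 : 0 <= wtot - warc i.+1 by rewrite subr_ge0 warc_le_wtot.
case: ifP => [/orP[]/eqP i_end | /norP[/eqP i0 /eqP i_last]].
- have -> : warc i = 0 by rewrite i_end warc0.
  by rewrite (min_l B_ge0) (min_r q_ge0) addr0.
- have -> : i.+1 = n by have := ltn_ord i; lia.
  by rewrite warc_n subrr (min_r A_ge0) (min_r q_ge0) addr0.
have i_mid : (0 < i < n.-1)%N by have := ltn_ord i; lia.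
have dCi := ringC_dist_self (HdC i i).
have dCi1 : dC i (ordS i) = wtot - warc i.+1.
  by apply: ringC_dist_ordS (HdC i (ordS i)); have := ltn_ord i; lia.
have -> : dC i (vmin lo i) = Num.min (warc i) (wtot - warc i.+1).
  move: (Hlo i_mid); rewrite /vmin dCi dCi1.
  by case: (lo i) => ?; [rewrite min_l | rewrite min_r].
by rewrite [RHS]addr_minr; congr (Num.min _ _); ring.
Qed.

Section LowerBound.
Variable q : R.
Hypothesis q_ge0 : 0 <= q.

Local Notation step := (step_state ring_adj (ring_wt w) hb).

Definition explored (b e : nat) (v : 'I_n) : bool := (v <= b)%N || (e <= v)%N.

Definition explored_wt (b e : nat) : R := warc b + (wtot - warc e).

(* [v_(b+1)], ..., [v_(e-1)] are unvisited and every agent stands on the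
   explored arc; [d] is at least the weight of that arc and, while at most one
   agent has been invoked, at least twice that weight minus the distance of the
   agent from [v_0] along the arc. *)
Definition frontier (b e : nat) (pos vis : seq 'I_n) (d : R) : Prop :=
  [/\ (b < e <= n)%N, all (explored b e) pos, all (explored b e) vis,
      explored_wt b e <= d &
      (size pos <= 1)%N -> explored_wt b e *+ 2 - `|coordC b (nth hb pos 0)| <= d].

Definition lb_inv (st : option (mstate R 'I_n)) : Prop :=
  if st is Some (pos, vis, d) then
    (exists b e, (b.+1 < e)%N /\ frontier b e pos vis d) \/
    (exists b, uncrossed_cost q b <= q * (size pos)%:R + d)
  else True.

Lemma explored_mono b e b' e' x :
  (b <= b')%N -> (e' <= e)%N -> explored b e x -> explored b' e' x.
Proof. by rewrite /explored => bb' ee' /orP[] xb; apply/orP; [left|right]; lia. Qed.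

Lemma coordC_bounds b v : - (wtot - warc b.+1) <= coordC b v <= warc b.
Proof.
rewrite /coordC; have := warc_ge0 v; have := warc_ge0 b.
have := warc_le_wtot v; have := warc_le_wtot b.+1.
by case: leqP => vb /=; have := le_warc vb => *; apply/andP; split; lra.
Qed.

Lemma frontier_closed b pos vis d : frontier b b.+1 pos vis d -> (0 < size pos)%N ->
  exists b, uncrossed_cost q b <= q * (size pos)%:R + d.
Proof.
case=> /andP[_ bn] _ _ wd wd1 pos0; exists (Ordinal bn).
have /andP[X_lo X_hi] := coordC_bounds b (nth hb pos 0).
rewrite /uncrossed_cost wCE /=; rewrite /explored_wt in wd wd1.
set A := warc b in wd wd1 X_hi *; set B := wtot - warc b.+1 in wd wd1 X_lo *.
have m_le_q : Num.min q (Num.min A B) <= q by rewrite ge_min lexx.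
have [m_le_A m_le_B] : Num.min q (Num.min A B) <= A /\ Num.min q (Num.min A B) <= B.
  by rewrite !ge_min !lexx !orbT.
case: (leqP (size pos) 1) => [pos1 | pos2].
  have -> : size pos = 1%N by lia.
  move: (wd1 pos1); rewrite mulr1 mulr2n.
  by case: (lerP 0 (coordC b (nth hb pos 0))) => X0; [rewrite ger0_norm | rewrite ltr0_norm]; lra.
have : q *+ 2 <= q * (size pos)%:R by rewrite -[q *+ 2]mulr_natr ler_wpM2l // ler_nat.
by rewrite mulr2n; lra.
Qed.

Lemma frontier_lb_inv b e pos vis d : frontier b e pos vis d -> (0 < size pos)%N ->
  lb_inv (Some (pos, vis, d)).
Proof.
move=> fr pos0; case: (ltnP b.+1 e) => be; first by left; exists b, e.
have e_eq : e = b.+1 by case: fr => /andP[? ?] *; lia.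
by rewrite e_eq in fr; right; apply: frontier_closed fr pos0.
Qed.

Lemma lb_inv_init : lb_inv (Some ([::], [::], 0)).
Proof.
left; exists 0%N, n; split; first by lia.
split=> //=; first by lia.
  by rewrite /explored_wt warc0 warc_n subrr addr0.
by rewrite /explored_wt coordC_hb warc0 warc_n subrr addr0 normr0 mul0rn subr0.
Qed.

Lemma frontier_invoke b e pos vis d :
  frontier b e pos vis d -> frontier b e (rcons pos hb) (hb :: vis) d.
Proof.
have hb_ex : explored b e hb by rewrite /explored hb_val leq0n.
case=> be pos_ex vis_ex wd wd1; split; rewrite /= ?all_rcons ?hb_ex //.
by rewrite size_rcons ltnS leqn0 => /nilP pos0; move: wd1; rewrite pos0; apply.
Qed.

Lemma nth_set_nth_single (pos : seq 'I_n) k v :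
  (k < size pos)%N -> (size pos <= 1)%N -> nth hb (set_nth hb pos k v) 0 = v.
Proof. by move=> kp p1; rewrite (_ : k = 0%N) ?nth_set_nth //; lia. Qed.

Lemma explored_coordC_lipschitz b e (p v : 'I_n) : (b.+1 < e <= n)%N ->
  explored b e p -> explored b e v -> ring_adj p v ->
  `|coordC b v - coordC b p| <= ring_wt w p v.
Proof.
move=> ben p_ex v_ex pv; have bn : (b < n)%N by lia.
have unex x : x = ordS (Ordinal bn) -> ~~ explored b e x.
  by move=> ->; rewrite /explored ordS_val /=; case: eqP; lia.
apply: (@coordC_lipschitz (Ordinal bn)); rewrite /ringC_adj pv /=.
by apply/negP => /orP[]/andP[_ /eqP x_eq]; [move: v_ex | move: p_ex]; rewrite (negbTE (unex _ x_eq)).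
Qed.

Lemma frontier_step_inside b e pos vis d k v : (b.+1 < e)%N ->
  frontier b e pos vis d -> (k < size pos)%N ->
  ring_adj (nth hb pos k) v -> explored b e v ->
  frontier b e (set_nth hb pos k v) (v :: vis) (d + ring_wt w (nth hb pos k) v).
Proof.
move=> be [ben pos_ex vis_ex wd wd1] kp pv v_ex.
have be_n : (b.+1 < e <= n)%N by case/andP: ben => _ ->; rewrite be.
have p_ex := allP pos_ex _ (mem_nth hb kp).
have Xvp := explored_coordC_lipschitz be_n p_ex v_ex pv.
have t_ge0 := ring_wt_ge0 (nth hb pos k) v.
split; rewrite /= ?v_ex ?all_set_nth //; first lra.
rewrite size_set_nth (maxn_idPr kp) => pos1; rewrite nth_set_nth_single //.
have k0 : k = 0%N by lia.
rewrite k0 in Xvp *; set Xp := coordC b (nth hb pos 0) in wd1 Xvp *.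
have : `|Xp| <= `|coordC b v| + `|coordC b v - Xp|.
  by rewrite distrC -{1}(subrK (coordC b v) Xp) addrC ler_normD.
by move: (wd1 pos1); rewrite mulr2n; lra.
Qed.

Lemma cw_exit b e (p v : 'I_n) : (b.+1 < e <= n)%N ->
  explored b e p -> ~~ explored b e v -> v = ordS p -> (p : nat) = b /\ (v : nat) = b.+1.
Proof.
move=> ben; rewrite /explored => p_ex v_unex vp; rewrite vp ordS_val in v_unex *.
by case: eqP v_unex => [_|pn]; lia.
Qed.

Lemma ccw_exit b e (p v : 'I_n) : (b.+1 < e <= n)%N ->
  explored b e p -> ~~ explored b e v -> p = ordS v ->
  (v : nat) = e.-1 /\ coordC b p = warc e - wtot.
Proof.
move=> ben; rewrite /explored /coordC => p_ex v_unex pv; have := ltn_ord v.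
rewrite pv ordS_val in p_ex *; case: eqP p_ex => [vn|_] p_ex vlt.
  have e_n : e = n by lia.
  by rewrite e_n warc_n warc0 subrr leq0n; split => //; lia.
have -> : e = v.+1 by lia.
by rewrite ifF //; lia.
Qed.

Lemma frontier_step_cw b e pos vis d k v : (b.+1 < e)%N ->
  frontier b e pos vis d -> (k < size pos)%N ->
  v = ordS (nth hb pos k) -> ~~ explored b e v ->
  lb_inv (Some (set_nth hb pos k v, v :: vis, d + ring_wt w (nth hb pos k) v)).
Proof.
move=> be [ben pos_ex vis_ex wd wd1] kp vp v_unex.
have be_n : (b.+1 < e <= n)%N by case/andP: ben => _ ->; rewrite be.
have [p_b v_b] := cw_exit be_n (allP pos_ex _ (mem_nth hb kp)) v_unex vp.
have v_ex : explored b.+1 e v by rewrite /explored v_b leqnn.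
have grow : {subset explored b e <= explored b.+1 e} by move=> x; apply: explored_mono.
have wt_t : ring_wt w (nth hb pos k) v = w (nth hb pos k) by rewrite vp ring_wt_ordS.
have warc_b1 : warc b.+1 = warc b + w (nth hb pos k) by rewrite -p_b warcS_ord.
apply: (@frontier_lb_inv b.+1 e); last by rewrite size_set_nth; lia.
split; rewrite /= ?v_ex ?all_set_nth ?(sub_all grow) //.
  by move: wd; rewrite /explored_wt wt_t warc_b1; lra.
rewrite size_set_nth (maxn_idPr kp) => pos1; rewrite nth_set_nth_single //.
have k0 : k = 0%N by lia.
have := wd1 pos1; rewrite k0 in p_b wt_t warc_b1 *.
rewrite /explored_wt /coordC p_b v_b !leqnn !ger0_norm ?warc_ge0 // wt_t warc_b1.
by rewrite !mulr2n; lra.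
Qed.

Lemma frontier_step_ccw b e pos vis d k v : (b.+1 < e)%N ->
  frontier b e pos vis d -> (k < size pos)%N ->
  nth hb pos k = ordS v -> ~~ explored b e v ->
  lb_inv (Some (set_nth hb pos k v, v :: vis, d + ring_wt w (nth hb pos k) v)).
Proof.
move=> be [ben pos_ex vis_ex wd wd1] kp pv v_unex.
have be_n : (b.+1 < e <= n)%N by case/andP: ben => _ ->; rewrite be.
have [v_e Xp] := ccw_exit be_n (allP pos_ex _ (mem_nth hb kp)) v_unex pv.
have v_ex : explored b e.-1 v by rewrite /explored v_e leqnn orbT.
have grow : {subset explored b e <= explored b e.-1}.
  by move=> x; apply: explored_mono => //; apply: leq_pred.
have wt_t : ring_wt w (nth hb pos k) v = w v by rewrite pv ring_wt_ordS_sym.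
have warc_e : warc e = warc e.-1 + w v by rewrite -v_e -warcS_ord v_e; congr warc; lia.
apply: (@frontier_lb_inv b e.-1); last by rewrite size_set_nth; lia.
split; rewrite /= ?v_ex ?all_set_nth ?(sub_all grow) //; first lia.
  by move: wd; rewrite /explored_wt wt_t warc_e; lra.
rewrite size_set_nth (maxn_idPr kp) => pos1; rewrite nth_set_nth_single //.
have k0 : k = 0%N by lia.
have := wd1 pos1; rewrite k0 in Xp wt_t *.
rewrite /explored_wt Xp /coordC v_e leqNgt (_ : (b < e.-1)%N) //; last lia.
rewrite /= !(distrC _ wtot) !ger0_norm ?subr_ge0 ?warc_le_wtot // wt_t warc_e.
by rewrite !mulr2n; lra.
Qed.

Lemma lb_inv_step st m : lb_inv st -> lb_inv (step st m).
Proof.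
case: st => [[[pos vis] d]|] //; case: m => [|k v] /=.
  case=> [[b [e [be fr]]] | [b lb]]; first by left; exists b, e; split; last exact: frontier_invoke.
  have : q * (size pos)%:R <= q * (size (rcons pos hb))%:R.
    by rewrite ler_wpM2l // ler_nat size_rcons.
  by right; exists b; lra.
case: ifP => // /andP[kp pv].
have t_ge0 := ring_wt_ge0 (nth hb pos k) v.
case=> [[b [e [be fr]]] | [b lb]]; last first.
  by right; exists b; rewrite size_set_nth (maxn_idPr kp); lra.
case v_ex: (explored b e v).
  by left; exists b, e; split; last exact: frontier_step_inside.
case/orP: pv => /eqP pv; first exact: frontier_step_cw be fr kp pv (negbT v_ex).
exact: frontier_step_ccw be fr kp pv (negbT v_ex).
Qed.

Lemma explores_uncrossed_cost T : explores ring_adj (ring_wt w) hb T ->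
  exists b, uncrossed_cost q b <= cost ring_adj (ring_wt w) hb q T.
Proof.
case=> pos [vis [d [run_T all_vis]]].
have : lb_inv (run ring_adj (ring_wt w) hb T).
  rewrite /run; elim: T (Some _) lb_inv_init {run_T} => //= m T IH st inv_st.
  exact/IH/lb_inv_step.
rewrite /cost run_T /= => -[[b [e [be [/andP[_ en] _ vis_ex _ _]]]] | //].
have b1n : (b.+1 < n)%N by lia.
by have := allP vis_ex _ (all_vis (Ordinal b1n)); rewrite /explored /=; lia.
Qed.

End LowerBound.

Definition fwd_path (j : nat) : seq 'I_n := [seq vtx t | t <- iota 1 j].
Definition bwd_path (j : nat) : seq 'I_n := [seq vtx (n - t) | t <- iota 1 (n - j)].
Definition back_to0_path (i : nat) : seq 'I_n := [seq vtx (i - t) | t <- iota 1 i].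
Definition fwd_to0_path (i : nat) : seq 'I_n := [seq vtx t | t <- iota i.+2 (n - i.+1)].

Lemma fwdE a j : fwd Hn a j = [seq Step a x | x <- fwd_path j].
Proof. by rewrite -map_comp. Qed.

Lemma bwdE a j : bwd Hn a j = [seq Step a x | x <- bwd_path j].
Proof. by rewrite -map_comp. Qed.

Lemma back_to0E a i : back_to0 Hn a i = [seq Step a x | x <- back_to0_path i].
Proof. by rewrite -map_comp. Qed.

Lemma fwd_to0E a i : fwd_to0 Hn a i = [seq Step a x | x <- fwd_to0_path i].
Proof. by rewrite -map_comp. Qed.

Lemma fwd_path_spec j : (j <= n)%N ->
  [/\ path ring_adj hb (fwd_path j), last hb (fwd_path j) = vtx j &
      walk_wt (ring_wt w) hb (fwd_path j) = warc j].
Proof.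
move=> jn; have [] := ring_walk_fwd (s := 0) (j := j) jn (fun t _ => ring_adj_vtxS t).
by rewrite add0n warc0 subr0.
Qed.

Lemma bwd_path_spec j : (j <= n)%N ->
  [/\ path ring_adj hb (bwd_path j), last hb (bwd_path j) = vtx j &
      walk_wt (ring_wt w) hb (bwd_path j) = wtot - warc j].
Proof.
move=> jn; have jn' : (n - j <= n <= n)%N by rewrite leq_subr leqnn.
have [] := ring_walk_bwd jn' (fun t _ => ring_adj_vtxS_sym t).
by rewrite subKn // vtx_n warc_n.
Qed.

Lemma back_to0_path_spec i : (i <= n)%N ->
  [/\ path ring_adj (vtx i) (back_to0_path i), last (vtx i) (back_to0_path i) = hb &
      walk_wt (ring_wt w) (vtx i) (back_to0_path i) = warc i].
Proof.
move=> iin; have ii : (i <= i <= n)%N by rewrite leqnn.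
have [] := ring_walk_bwd ii (fun t _ => ring_adj_vtxS_sym t).
by rewrite subnn warc0 subr0.
Qed.

Lemma fwd_to0_path_spec i : (i < n)%N ->
  [/\ path ring_adj (vtx i.+1) (fwd_to0_path i), last (vtx i.+1) (fwd_to0_path i) = hb &
      walk_wt (ring_wt w) (vtx i.+1) (fwd_to0_path i) = wtot - warc i.+1].
Proof.
move=> iin; have iin' : (i.+1 + (n - i.+1) <= n)%N by rewrite subnKC.
have [] := ring_walk_fwd iin' (fun t _ => ring_adj_vtxS t).
by rewrite subnKC // vtx_n warc_n.
Qed.

Lemma ring_cover i v : (i < n)%N ->
  [|| v == hb, v \in fwd_path i | v \in bwd_path i.+1].
Proof.
move=> iin; have vn := ltn_ord v; case: (posnP v) => [v0|v_pos].
  by rewrite (_ : v = hb) ?eqxx //; apply: ord_inj; rewrite v0 hb_val.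
case: (leqP v i) => vi.
  by rewrite -(vtx_ord v) (map_f (fun t => vtx t)) ?orbT // mem_iota; lia.
have -> : v = vtx (n - (n - v)) by rewrite subKn 1?ltnW // vtx_ord.
by rewrite (map_f (fun t => vtx (n - t))) ?orbT // mem_iota; lia.
Qed.

Section Offline.
Variables (q : R) (dC : 'I_n -> 'I_n -> R) (lo : 'I_n -> bool).
Hypothesis HdC : forall i v, is_dist (ringC_adj i) (ring_wt w) hb v (dC i v).

Local Notation offline_spec i :=
  (explores_at_cost ring_adj (ring_wt w) hb q (ringOffline Hn w q dC lo i) (ring_c w q dC lo i)).

Lemma ringOffline_first (i : 'I_n) : (i : nat) = 0%N -> offline_spec i.
Proof.
move=> i0; rewrite /ringOffline /ring_c i0 /= bwdE.
have [p_path _ p_wt] := @bwd_path_spec 1 (ltnW (ltnW Hn)).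
apply: one_agent_explores_at_cost => //.
  by move=> v; have := @ring_cover 0 v (ltnW (ltnW Hn)); rewrite inE.
by rewrite p_wt wCE i0 warc0 add0r.
Qed.

Lemma ringOffline_last (i : 'I_n) : (i : nat) = n.-1 -> offline_spec i.
Proof.
move=> i_last; have n1_pos : (n.-1 == 0)%N = false by apply/negbTE; lia.
have n1n : (n.-1 < n)%N by lia.
rewrite /ringOffline /ring_c i_last n1_pos eqxx /= fwdE.
have [p_path _ p_wt] := @fwd_path_spec n.-1 (leq_pred n).
apply: one_agent_explores_at_cost => //.
  move=> v; have := ring_cover v n1n; rewrite prednK; last by lia.
  by rewrite /bwd_path subnn !inE orbF.
by rewrite p_wt wCE i_last prednK ?warc_n ?subrr ?addr0 //; lia.
Qed.

Lemma dC_vmin (i : 'I_n) : (i.+1 < n)%N ->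
  dC i (vmin lo i) = if lo i then warc i else wtot - warc i.+1.
Proof.
move=> i1n; rewrite /vmin; case: (lo i).
  exact: ringC_dist_self (HdC i i).
exact: ringC_dist_ordS i1n (HdC i (ordS i)).
Qed.

Lemma ringOffline_mid (i : 'I_n) : (i : nat) != 0%N -> (i : nat) != n.-1 -> offline_spec i.
Proof.
move=> i0 i_last; have i1n : (i.+1 < n)%N by have := ltn_ord i; lia.
have iin := ltn_ord i.
rewrite /ringOffline /ring_c (negbTE i0) (negbTE i_last) /= dC_vmin // wCE.
have [f_path f_last f_wt] := fwd_path_spec (ltnW iin).
have [b_path b_last b_wt] := bwd_path_spec iin.
have cover v p : {subset fwd_path i ++ bwd_path i.+1 <= p} -> v \in hb :: p.
  move=> sub; have := ring_cover v iin; rewrite !inE.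
  by case/orP=> [-> // | fb]; rewrite sub ?orbT // mem_cat.
case: ifP => [two | /negbT]; [rewrite min_l ?ltW // | rewrite -leNgt => one; rewrite min_r //].
  case: (lo i); rewrite fwdE bwdE.
    apply: two_agents_explores_at_cost f_path b_path _ _; first by move=> v; apply: cover.
    by rewrite f_wt b_wt; ring.
  apply: two_agents_explores_at_cost b_path f_path _ _.
    by move=> v; apply: cover => x; rewrite !mem_cat orbC.
  by rewrite f_wt b_wt; ring.
case: (lo i); rewrite ?fwdE ?bwdE ?back_to0E ?fwd_to0E -2!map_cat.
  have [k_path k_last k_wt] := back_to0_path_spec (ltnW iin).
  apply: one_agent_explores_at_cost.
  - by rewrite !cat_path f_path f_last k_path k_last b_path.
  - by move=> v; apply: cover => x; rewrite !mem_cat; case/orP=> ->; rewrite ?orbT.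
  - by rewrite !walk_wt_cat f_wt f_last k_wt k_last b_wt; ring.
have [k_path k_last k_wt] := fwd_to0_path_spec iin.
apply: one_agent_explores_at_cost.
- by rewrite !cat_path b_path b_last k_path k_last f_path.
- by move=> v; apply: cover => x; rewrite !mem_cat; case/orP=> ->; rewrite ?orbT.
- by rewrite !walk_wt_cat b_wt b_last k_wt k_last f_wt; ring.
Qed.

Lemma ringOffline_explores_at_cost (i : 'I_n) : offline_spec i.
Proof.
have [i0|i0] := eqVneq (i : nat) 0%N; first exact: ringOffline_first.
have [i_last|i_last] := eqVneq (i : nat) n.-1; first exact: ringOffline_last.
exact: ringOffline_mid.
Qed.

End Offline.

End Ring.

Theorem mainTheorem1 (R : realFieldType) (n : nat) (Hn : (2 < n)%N)
    (w : 'I_n -> R) (q : R)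
    (w_pos : forall i, 0 < w i) (q_ge0 : 0 <= q)
    (* dC i v = d_{C_i}(v_0, v) *)
    (dC : 'I_n -> 'I_n -> R)
    (HdC : forall i v, is_dist (ringC_adj i) (ring_wt w) (hb Hn) v (dC i v))
    (* choice of v_i^min / v_i^max, consistent with the distances in C_i *)
    (lo : 'I_n -> bool)
    (Hlo : forall i : 'I_n, (0 < i < n.-1)%N ->
       if lo i then dC i i <= dC i (ordS i) else dC i (ordS i) <= dC i i)
    (* i^* minimizes c_i *)
    (istar : 'I_n)
    (Hmin : forall i, ring_c w q dC lo istar <= ring_c w q dC lo i) :
  explores (ring_adj (n:=n)) (ring_wt w) (hb Hn) (ringOffline Hn w q dC lo istar) /\
  forall T : seq (move 'I_n),
    explores (ring_adj (n:=n)) (ring_wt w) (hb Hn) T ->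
    cost (ring_adj (n:=n)) (ring_wt w) (hb Hn) q (ringOffline Hn w q dC lo istar)
    <= cost (ring_adj (n:=n)) (ring_wt w) (hb Hn) q T.
Proof.
have [S_explores S_cost] := ringOffline_explores_at_cost w_pos q lo HdC istar.
split=> // T T_explores; rewrite S_cost.
have [b T_cost] := explores_uncrossed_cost w_pos q_ge0 T_explores.
by apply: le_trans (Hmin b) _; rewrite (ring_c_uncrossed w_pos q_ge0 HdC (Hlo b)).
Qed.
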